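(* Let $\Sigma\subseteq\mathcal L_{\Diamond\forall}$ be closed under subformulas and let $\mathfrak Q=(W,\preccurlyeq,S,\ell)$ be an honest, deterministic $\Sigma$-quasimodel. Define a valuation $[\![\cdot]\!]_{\mathfrak Q}$ on the dynamical system $(W,\text{up-set topology of }\preccurlyeq,S)$ by $[\![p]\!]_{\mathfrak Q}=\{w\in W: p\in\ell^+(w)\}$, extended to all formulas by the usual recursive clauses. Then for all formulas $\varphi\in\mathcal L_\Diamond$ and all $w\in W$: (1) if $\varphi\in\ell^+(w)$ then $w\in[\![\varphi]\!]_{\mathfrak Q}$, and (2) if $\varphi\in\ell^-(w)$ then $w\notin[\![\varphi]\!]_{\mathfrak Q}$.
   Context: $\mathcal L_{\Diamond\forall}$: formulas $\varphi::=\bot\mid p\mid\varphi\wedge\varphi\mid\varphi\vee\varphi\mid\varphi\to\varphi\mid\circ\varphi\mid\Diamond\varphi\mid\forall\varphi$; $\mathcal L_\Diamond$ is its $\forall$-free fragment. Recursive clauses of a valuation on a dynamical system $(X,\mathcal T,f)$: $[\![\bot]\!]=\varnothing$, $[\![\varphi\wedge\psi]\!]=[\![\varphi]\!]\cap[\![\psi]\!]$, $[\![\varphi\vee\psi]\!]=[\![\varphi]\!]\cup[\![\psi]\!]$, $[\![\varphi\to\psi]\!]=((X\setminus[\![\varphi]\!])\cup[\![\psi]\!])^\circ$, $[\![\circ\varphi]\!]=f^{-1}[\![\varphi]\!]$, $[\![\Diamond\varphi]\!]=\bigcup_nf^{-n}[\![\varphi]\!]$, $[\![\forall\varphi]\!]=X$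 if $[\![\varphi]\!]=X$ else $\varnothing$. The up-set topology of a partial order has the upward closed sets as open sets. A $\Sigma$-type is a pair $\Phi=(\Phi^+,\Phi^-)$ of finite subsets of $\Sigma$ with: (1) $\Phi^-\cap\Phi^+=\varnothing$; (2) $\bot\notin\Phi^+$; (3) $\varphi\wedge\psi\in\Phi^+\Rightarrow\varphi,\psi\in\Phi^+$; (4) $\varphi\wedge\psi\in\Phi^-\Rightarrow\varphi\in\Phi^-$ or $\psi\in\Phi^-$; (5) $\varphi\vee\psi\in\Phi^+\Rightarrow\varphi\in\Phi^+$ or $\psi\in\Phi^+$; (6) $\varphi\vee\psi\in\Phi^-\Rightarrow\varphi,\psi\in\Phi^-$; (7) $\varphi\to\psi\in\Phi^+\Rightarrow\varphi\in\Phi^-$ or $\psi\in\Phi^+$; (8) $\varphi\to\psi\in\Phi^-\Rightarrow\psi\in\Phi^-$; (9) $\Diamond\varphi\in\Phi^-\Rightarrow\varphi\in\Phi^-$. $\Phi\preccurlyeq_T\Psi$ means $\Phi^+\subseteq\Psi^+$ and $\Psi^-\subseteq\Phi^-$. A pair $(\Phi,\Psi)$ of types is sensible if: $\circ\varphi\in\Phi^+\Rightarrow\varphi\in\Psi^+$; $\circ\varphi\in\Phi^-\Rightarrow\varphi\in\Psi^-$; $\Diamond\varphi\in\Phi^+\Rightarrow\varphi\in\Phi^+$ or $\Diamond\varphi\in\Psi^+$; $\Diamond\varphi\in\Phi^-\Rightarrow\Diamond\varphi\in\Psi^-$; $\forall\varphi\in\Phi^+\Leftrightarrow\forall\varphi\in\Psi^+$;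 $\forall\varphi\in\Phi^-\Leftrightarrow\forall\varphi\in\Psi^-$. A $\Sigma$-quasimodel is $(W,\preccurlyeq,S,\ell)$ where $\preccurlyeq$ is a partial order on $W$; $\ell$ assigns to each $w$ a $\Sigma$-type $\ell(w)=(\ell^+(w),\ell^-(w))$ with $w\preccurlyeq v\Rightarrow\ell(w)\preccurlyeq_T\ell(v)$; whenever $\varphi\to\psi\in\ell^-(w)$ there is $v\succcurlyeq w$ with $\varphi\in\ell^+(v)$, $\psi\in\ell^-(v)$; $S\subseteq W\times W$ is forward confluent (if $w\preccurlyeq w'$ and $w\mathrel Sv$ then there is $v'\succcurlyeq v$ with $w'\mathrel Sv'$); every pair $(\ell(w),\ell(v))$ with $w\mathrel Sv$ is sensible; $S$ is serial; and $S$ is $\omega$-sensible: whenever $\Diamond\varphi\in\ell^+(w)$ there are $n\ge0$ and $v$ with $w\mathrel{S^n}v$ and $\varphi\in\ell^+(v)$. It is honest if for all $w$ and $\forall\varphi\in\Sigma$: $\forall\varphi\in\ell^+(w)$ implies $\varphi\in\ell^+(v)$ for all $v\in W$, and $\forall\varphi\in\ell^-(w)$ implies $\varphi\in\ell^-(v)$ for some $v\in W$. It is deterministic if $S$ is a function. *)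

From Stdlib Require Import List.
Import ListNotations.

Inductive form : Type :=
| Bot : form
| Var : nat -> form
| And : form -> form -> form
| Or : form -> form -> form
| Imp : form -> form -> form
| Next : form -> form
| Dia : form -> form
| All : form -> form.

Fixpoint forall_free (p : form) : Prop :=
  match p with
  | Bot | Var _ => True
  | And a b | Or a b | Imp a b => forall_free a /\ forall_free b
  | Next a | Dia a => forall_free a
  | All _ => False
  end.

(* Sigma closed under (immediate, hence all) subformulas. *)
Definition subformula_closed (Sig : form -> Prop) : Prop :=
  forall p, Sig p ->
    match p with
    | Bot | Var _ => True
    | And a b | Or a b | Imp a b => Sig a /\ Sig b
    | Next a | Dia a | All a => Sig a
    end.

Definition finite_set (P : form -> Prop) : Prop :=
  exists l : list form, forall p, P p -> In p l.

Definition is_type (Sig : form -> Prop) (Pp Pn : form -> Prop) : Prop :=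
  finite_set Pp /\ finite_set Pn /\
  (forall p, Pp p -> Sig p) /\ (forall p, Pn p -> Sig p) /\
  (forall p, ~ (Pn p /\ Pp p)) /\
  ~ Pp Bot /\
  (forall a b, Pp (And a b) -> Pp a /\ Pp b) /\
  (forall a b, Pn (And a b) -> Pn a \/ Pn b) /\
  (forall a b, Pp (Or a b) -> Pp a \/ Pp b) /\
  (forall a b, Pn (Or a b) -> Pn a /\ Pn b) /\
  (forall a b, Pp (Imp a b) -> Pn a \/ Pp b) /\
  (forall a b, Pn (Imp a b) -> Pn b) /\
  (forall a, Pn (Dia a) -> Pn a).

Definition type_le (Pp Pn Qp Qn : form -> Prop) : Prop :=
  (forall p, Pp p -> Qp p) /\ (forall p, Qn p -> Pn p).

Definition sensible (Pp Pn Qp Qn : form -> Prop) : Prop :=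
  (forall a, Pp (Next a) -> Qp a) /\
  (forall a, Pn (Next a) -> Qn a) /\
  (forall a, Pp (Dia a) -> Pp a \/ Qp (Dia a)) /\
  (forall a, Pn (Dia a) -> Qn (Dia a)) /\
  (forall a, Pp (All a) <-> Qp (All a)) /\
  (forall a, Pn (All a) <-> Qn (All a)).

Fixpoint rel_pow {W : Type} (R : W -> W -> Prop) (n : nat) : W -> W -> Prop :=
  match n with
  | O => fun w v => w = v
  | Datatypes.S n => fun w v => exists u, R w u /\ rel_pow R n u v
  end.

Definition partial_order {W : Type} (le : W -> W -> Prop) : Prop :=
  (forall w, le w w) /\
  (forall u v w, le u v -> le v w -> le u w) /\
  (forall u v, le u v -> le v u -> u = v).

(* (W, le, S, l) is a Sigma-quasimodel, with l(w) = (lp w, ln w). *)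
Definition quasimodel (Sig : form -> Prop) (W : Type) (le S : W -> W -> Prop)
    (lp ln : W -> form -> Prop) : Prop :=
  partial_order le /\
  (forall w, is_type Sig (lp w) (ln w)) /\
  (forall w v, le w v -> type_le (lp w) (ln w) (lp v) (ln v)) /\
  (forall w a b, ln w (Imp a b) -> exists v, le w v /\ lp v a /\ ln v b) /\
  (forall w w' v, le w w' -> S w v -> exists v', le v v' /\ S w' v') /\
  (forall w v, S w v -> sensible (lp w) (ln w) (lp v) (ln v)) /\
  (forall w, exists v, S w v) /\
  (forall w a, lp w (Dia a) -> exists n v, rel_pow S n w v /\ lp v a).

Definition honest (Sig : form -> Prop) (W : Type) (lp ln : W -> form -> Prop) : Prop :=
  forall a, Sig (All a) ->
    (forall w, lp w (All a) -> forall v, lp v a) /\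
    (forall w, ln w (All a) -> exists v, ln v a).

Definition deterministic_by {W : Type} (S : W -> W -> Prop) (f : W -> W) : Prop :=
  forall w v, S w v <-> f w = v.

Fixpoint iter {W : Type} (f : W -> W) (n : nat) (w : W) : W :=
  match n with O => w | Datatypes.S n => f (iter f n w) end.

Definition up_interior {W : Type} (le : W -> W -> Prop) (A : W -> Prop) : W -> Prop :=
  fun w => forall v, le w v -> A v.

Fixpoint sem {W : Type} (le : W -> W -> Prop) (f : W -> W) (V : nat -> W -> Prop)
    (p : form) : W -> Prop :=
  match p with
  | Bot => fun _ => False
  | Var n => V n
  | And a b => fun w => sem le f V a w /\ sem le f V b w
  | Or a b => fun w => sem le f V a w \/ sem le f V b w
  | Imp a b => up_interior le (fun w => ~ sem le f V a w \/ sem le f V b w)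
  | Next a => fun w => sem le f V a (f w)
  | Dia a => fun w => exists n, sem le f V a (iter f n w)
  | All a => fun _ => forall v, sem le f V a v
  end.

(* Induction on the formula, proving both halves of the truth lemma at once.
   Each clause of the definition of a type matches the semantic clause of its
   connective; implication additionally uses monotonicity of labels along the
   order and the witnesses for negated implications.  Since S is the function f,
   [S^n] is [iter f n], so omega-sensibility gives the positive diamond clause,
   while sensibility propagates a negated diamond along the whole f-orbit.
   Honesty and subformula closure are only needed for the universal modality,
   which does not occur in the forall-free fragment. *)


Lemma iter_f_comm {W : Type} (f : W -> W) (n : nat) (w : W) :
  iter f n (f w) = f (iter f n w).
Proof. induction n; simpl; congruence. Qed.

Lemma rel_pow_deterministic {W : Type} (S : W -> W -> Prop) (f : W -> W) :
  deterministic_by S f -> forall n w v, rel_pow S n w v -> v = iter f n w.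
Proof.
  intros Hdet n; induction n as [|n IH]; simpl; intros w v H.
  - congruence.
  - destruct H as (u & Hu & Huv).
    apply Hdet in Hu; subst u.
    rewrite (IH _ _ Huv); apply iter_f_comm.
Qed.

Definition label_valuation {W : Type} (lp : W -> form -> Prop) : nat -> W -> Prop :=
  fun n v => lp v (Var n).

Section TruthLemma.

Variables (Sig : form -> Prop) (W : Type) (le S : W -> W -> Prop)
  (lp ln : W -> form -> Prop) (f : W -> W).

Hypothesis types : forall w, is_type Sig (lp w) (ln w).
Hypothesis types_monotone :
  forall w v, le w v -> type_le (lp w) (ln w) (lp v) (ln v).
Hypothesis Imp_witness :
  forall w a b, ln w (Imp a b) -> exists v, le w v /\ lp v a /\ ln v b.
Hypothesis S_sensible : forall w v, S w v -> sensible (lp w) (ln w) (lp v) (ln v).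
Hypothesis Dia_witness :
  forall w a, lp w (Dia a) -> exists n v, rel_pow S n w v /\ lp v a.
Hypothesis S_is_f : deterministic_by S f.

Let sem_Q := sem le f (label_valuation lp).

Definition truthful (phi : form) : Prop :=
  forall w, (lp w phi -> sem_Q phi w) /\ (ln w phi -> ~ sem_Q phi w).

Lemma sensible_f (w : W) : sensible (lp w) (ln w) (lp (f w)) (ln (f w)).
Proof. apply S_sensible, S_is_f; reflexivity. Qed.

Lemma truthful_Bot : truthful Bot.
Proof.
  intro w; destruct (types w) as (_ & _ & _ & _ & _ & Hbot & _).
  simpl; tauto.
Qed.

Lemma truthful_Var (n : nat) : truthful (Var n).
Proof.
  intro w; destruct (types w) as (_ & _ & _ & _ & Hdisj & _).
  simpl; unfold label_valuation; split; [tauto|].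
  intros Hn Hp; exact (Hdisj _ (conj Hn Hp)).
Qed.

Lemma truthful_And (a b : form) : truthful a -> truthful b -> truthful (And a b).
Proof.
  intros IHa IHb w; destruct (types w) as (_ & _ & _ & _ & _ & _ & Hp & Hn & _).
  simpl; split.
  - intro H; destruct (Hp _ _ H); split; [apply IHa | apply IHb]; assumption.
  - intros H [Sa Sb]; destruct (Hn _ _ H) as [Na | Nb].
    + exact (proj2 (IHa w) Na Sa).
    + exact (proj2 (IHb w) Nb Sb).
Qed.

Lemma truthful_Or (a b : form) : truthful a -> truthful b -> truthful (Or a b).
Proof.
  intros IHa IHb w;
    destruct (types w) as (_ & _ & _ & _ & _ & _ & _ & _ & Hp & Hn & _).
  simpl; split.
  - intro H; destruct (Hp _ _ H); [left; apply IHa | right; apply IHb]; assumption.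
  - intros H Sab; destruct (Hn _ _ H) as [Na Nb]; destruct Sab as [Sa | Sb].
    + exact (proj2 (IHa w) Na Sa).
    + exact (proj2 (IHb w) Nb Sb).
Qed.

Lemma truthful_Imp (a b : form) : truthful a -> truthful b -> truthful (Imp a b).
Proof.
  intros IHa IHb w; simpl; unfold up_interior; split.
  - intros H v Hwv.
    assert (Hv : lp v (Imp a b)) by exact (proj1 (types_monotone _ _ Hwv) _ H).
    destruct (types v) as (_ & _ & _ & _ & _ & _ & _ & _ & _ & _ & Hp & _).
    destruct (Hp _ _ Hv) as [Na | Pb].
    + left; exact (proj2 (IHa v) Na).
    + right; exact (proj1 (IHb v) Pb).
  - intros H Hsem; destruct (Imp_witness _ _ _ H) as (v & Hwv & Pa & Nb).
    destruct (Hsem v Hwv) as [NSa | Sb].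
    + exact (NSa (proj1 (IHa v) Pa)).
    + exact (proj2 (IHb v) Nb Sb).
Qed.

Lemma truthful_Next (a : form) : truthful a -> truthful (Next a).
Proof.
  intros IHa w; destruct (sensible_f w) as (Hp & Hn & _).
  simpl; split.
  - intro H; exact (proj1 (IHa (f w)) (Hp _ H)).
  - intro H; exact (proj2 (IHa (f w)) (Hn _ H)).
Qed.

Lemma ln_Dia_orbit (a : form) (w : W) :
  ln w (Dia a) -> forall n, ln (iter f n w) (Dia a).
Proof.
  intros H n; induction n as [|n IH]; simpl; [exact H|].
  destruct (sensible_f (iter f n w)) as (_ & _ & _ & Hn & _).
  exact (Hn _ IH).
Qed.

Lemma truthful_Dia (a : form) : truthful a -> truthful (Dia a).
Proof.
  intros IHa w; simpl; split.
  - intro H; destruct (Dia_witness _ _ H) as (n & v & Hwv & Pa).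
    exists n; rewrite <- (rel_pow_deterministic S f S_is_f n w v Hwv).
    exact (proj1 (IHa v) Pa).
  - intros H [n Sa].
    destruct (types (iter f n w)) as (_ & _ & _ & _ & _ & _ & _ & _ & _ & _ & _ & _ & Hn).
    exact (proj2 (IHa _) (Hn _ (ln_Dia_orbit a w H n)) Sa).
Qed.

Lemma truth_lemma (phi : form) : forall_free phi -> truthful phi.
Proof.
  induction phi as [| n | a IHa b IHb | a IHa b IHb | a IHa b IHb | a IHa | a IHa | a IHa];
    simpl; intro Hff.
  - apply truthful_Bot.
  - apply truthful_Var.
  - apply truthful_And; tauto.
  - apply truthful_Or; tauto.
  - apply truthful_Imp; tauto.
  - apply truthful_Next; tauto.
  - apply truthful_Dia; tauto.
  - contradiction.
Qed.

End TruthLemma.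

Theorem lemma4p7 (Sig : form -> Prop) (W : Type) (le S : W -> W -> Prop)
    (lp ln : W -> form -> Prop) (f : W -> W) :
  subformula_closed Sig ->
  quasimodel Sig W le S lp ln ->
  honest Sig W lp ln ->
  deterministic_by S f ->
  forall (phi : form), forall_free phi ->
  forall w : W,
    (lp w phi -> sem le f (fun n v => lp v (Var n)) phi w) /\
    (ln w phi -> ~ sem le f (fun n v => lp v (Var n)) phi w).
Proof.
  intros _ HQ _ Hdet phi Hff.
  destruct HQ as (_ & Htypes & Hmono & Himp & _ & Hsens & _ & Hdia).
  exact (truth_lemma Sig W le S lp ln f Htypes Hmono Himp Hsens Hdia Hdet phi Hff).
Qed.
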